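(* Let $X$ be a normal Hausdorff space which contains a subspace homeomorphic to $[0,1]$ (an arc). Then for any two distinct points $x,u\in X$ there is a continuous quotient surjection $f\colon X\to[0,1]$ with $f(x)=0$ and $f(u)=1$.
   Context: A surjection $f\colon X\to Y$ is a quotient map if for every $G\subseteq Y$, $G$ is open in $Y$ iff $f^{-1}(G)$ is open in $X$. A continuous quotient surjection $f\colon X\to[0,1]$ with $f(x)=0$, $f(u)=1$ is what the paper calls a quotient Urysohn function for $x$ and $u$. *)

(* X is a topologicalType, [0,1] is the unit interval
   of an arbitrary realType R (all realTypes are isomorphic to the reals). *)
From HB Require Import structures.
From mathcomp Require Import all_boot all_order all_algebra.
From mathcomp Require Import all_classical all_reals all_analysis.
Set Implicit Arguments. Unset Strict Implicit. Unset Printing Implicit Defensive.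
Import Order.TTheory GRing.Theory Num.Theory numFieldNormedType.Exports.
Local Open Scope classical_set_scope.
Local Open Scope ring_scope.

Definition unit_interval {R : realType} : set R := `[0%R, 1%R].

Definition open_in_unit_interval {R : realType} (G : set R) : Prop :=
  exists U : set R, open U /\ G = U `&` unit_interval.

(* X contains a subspace homeomorphic to [0,1]: there is an embedding
   h : [0,1] -> X which is a homeomorphism onto its image h @` [0,1]
   (both with the subspace topologies), witnessed by an inverse g. *)
Definition contains_arc {R : realType} (X : topologicalType) : Prop :=
  exists (h : R -> X) (g : X -> R),
    {within (@unit_interval R), continuous h} /\
    {within h @` (@unit_interval R), continuous g} /\
    (forall t, unit_interval t -> g (h t) = t) /\
    (forall x, (h @` (@unit_interval R)) x -> unit_interval (g x)).

Definition quotient_onto_unit_interval {R : realType} {X : topologicalType}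
  (f : X -> R) : Prop :=
  f @` setT = (@unit_interval R) /\
  forall G : set R, G `<=` unit_interval ->
    (open_in_unit_interval G <-> open (f @^-1` G)).

From HB Require Import structures.
From mathcomp Require Import all_boot all_order all_algebra.
From mathcomp Require Import all_classical all_reals all_analysis.
Set Implicit Arguments. Unset Strict Implicit. Unset Printing Implicit Defensive.
Import Order.TTheory GRing.Theory Num.Theory numFieldNormedType.Exports.
Local Open Scope classical_set_scope.
Local Open Scope ring_scope.

(* Orient the arc so that its end [h a] differs from u and its end [h b]
   differs from x; Urysohn's lemma for the closed sets {x, h a} and {u, h b}
   gives f with f x = f (h a) = 0 and f u = f (h b) = 1.  By the intermediate
   value theorem f maps the arc onto [0,1], and a continuous map into [0,1]
   sending a compact set onto [0,1] is a quotient map, since it is closed on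
   that compact set. *)

Lemma quotient_onto_unit_interval_compact (R : realType) (X : topologicalType)
    (f : X -> R) (K : set X) :
  continuous f -> range f `<=` unit_interval -> compact K ->
  unit_interval `<=` f @` K -> quotient_onto_unit_interval f.
Proof.
move=> fc frng cK Kf; split.
  apply/seteqP; split; first exact: frng.
  by move=> y /Kf [z _ <-]; exists z.
move=> G GI; split.
  case=> U [oU ->].
  have -> : f @^-1` (U `&` unit_interval) = f @^-1` U.
    apply/seteqP; split => z /=; first by case.
    by move=> Uz; split => //; apply: frng; exists z.
  by apply: open_comp => // z _; exact: fc.
move=> oG.
pose C := K `&` f @^-1` (~` G).
have cC : compact C by apply: compact_closedI => //; exact: open_closedC.
have cfC : compact (f @` C).
  by apply: continuous_compact => //; apply: continuous_subspaceT.
exists (~` (f @` C)); split.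
  by apply: closed_openC; apply: compact_closed => //; exact: Rhausdorff.
apply/seteqP; split.
  move=> y Gy; split; last exact: GI.
  by move=> [z [_ nGfz] fzy]; apply: nGfz; rewrite /= fzy.
move=> y [nfCy Iy]; have [z Kz fzy] := Kf y Iy.
apply: contrapT => nGy; apply: nfCy; exists z => //; split => //.
by rewrite /= fzy.
Qed.

Lemma unit_interval_sub_image (R : realType) (g : R -> R) :
  {within unit_interval, continuous g} ->
  (g 0 = 0 /\ g 1 = 1) \/ (g 0 = 1 /\ g 1 = 0) ->
  unit_interval `<=` g @` unit_interval.
Proof.
move=> gc g01 y Iy.
have [t It gty] : exists2 t, t \in `[(0:R), 1] & g t = y.
  apply: IVT => //; move: Iy; rewrite /unit_interval /= in_itv /=.
  by case: g01 => -[-> ->]; rewrite /Num.min /Num.max ?ltr01 ?ltr10.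
by exists t.
Qed.

Lemma exists_orientation_avoiding (I T : Type) (h : I -> T) (i j : I)
    (x u : T) :
  h i <> h j -> x <> u ->
  exists a b, ((a, b) = (i, j) \/ (a, b) = (j, i)) /\ h a <> u /\ h b <> x.
Proof.
move=> hij xu; case: (pselect (h i = u \/ h j = x)) => [hiu_hjx|].
  exists j, i; split; first by right.
  case: hiu_hjx => [hiu|hjx]; split.
  - by move=> hju; apply: hij; rewrite hiu hju.
  - by move=> hix; apply: xu; rewrite -hiu hix.
  - by move=> hju; apply: xu; rewrite -hjx hju.
  - by move=> hix; apply: hij; rewrite hix hjx.
by move=> nE; exists i, j; split; [left|split => E; apply: nE; auto].
Qed.

Lemma urysohn_two_pairs (R : realType) (X : topologicalType) (x p u q : X) :
  normal_space X -> accessible_space X ->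
  x <> u -> x <> q -> p <> u -> p <> q ->
  exists f : X -> R, [/\ continuous f, range f `<=` unit_interval,
    f x = 0 /\ f p = 0 & f u = 1 /\ f q = 1].
Proof.
move=> nX hX xu xq pu pq.
have cl1 := accessible_closed_set1 hX.
have AB0 : ([set x] `|` [set p]) `&` ([set u] `|` [set q]) = set0.
  by apply/seteqP; split => // z [[->|->] [E|E]].
have [f [fc fA fB frng]] :=
  urysohn_ext_itv nX (closedU (cl1 x) (cl1 p)) (closedU (cl1 u) (cl1 q))
    AB0 (@ltr01 R).
exists f; split => //.
  by split; apply: fA; [exists x => //; left|exists p => //; right].
by split; apply: fB; [exists u => //; left|exists q => //; right].
Qed.

Theorem mainTheorem8 (R : realType) (X : topologicalType) :
  normal_space X -> hausdorff_space X -> @contains_arc R X ->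
  forall x u : X, x <> u ->
  exists f : X -> R,
    continuous f /\ quotient_onto_unit_interval f /\ f x = 0 /\ f u = 1.
Proof.
move=> nX hX [h [g [hc [_ [gh _]]]]] x u xu.
have I0 : @unit_interval R 0 by rewrite /unit_interval /= in_itv /= lexx ler01.
have I1 : @unit_interval R 1 by rewrite /unit_interval /= in_itv /= lexx ler01.
have h01 : h 0 <> h 1.
  move=> E; have := gh 1 I1; rewrite -E gh // => /eqP.
  by rewrite eq_sym oner_eq0.
have [a [b [ab [hau hbx]]]] := exists_orientation_avoiding h01 xu.
have hab : h a <> h b by case: ab => -[-> ->] // /esym.
have [f [fc frng [fx fa] [fu fb]]] :=
  urysohn_two_pairs R nX (hausdorff_accessible hX) xu (nesym hbx) hau hab.
have arc_compact : compact (h @` unit_interval).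
  by apply: continuous_compact => //; exact: segment_compact.
exists f; split => //; split => //.
apply: (quotient_onto_unit_interval_compact fc frng arc_compact).
have onto : unit_interval `<=` (f \o h) @` unit_interval.
  apply: unit_interval_sub_image.
    by move=> t; apply: continuous_comp (hc t) (fc (h t)).
  by case: ab => -[ea eb]; rewrite ea eb in fa fb; rewrite /= fa fb; [left|right].
by move=> y /onto [t It <-]; exists (h t) => //; exists t.
Qed.
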